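(* Let $\Omega$ be a finite-dimensional real Euclidean space, let $N \geq 1$, and let $f_1,\dots,f_N \colon \Omega \to \mathbb{R}$ be continuous convex functions, each of which is $\mu$-strongly convex for some $\mu > 0$. Let $\nu \in (0,\mu]$, fix an index $j \in \{1,\dots,N\}$ and a vector $\zeta_j \in \Omega$. Define $g_j(\theta) = f_j(\theta) - \frac{\nu}{2}\|\theta\|^2$ and \[ E^{j}(\theta) = f_j(\theta) - \nu \langle \zeta_j, \theta\rangle, \qquad E^{j}_{\mathrm{d}}(\xi) = g_j^*(\xi) + \frac{1}{2\nu}\|\xi - \nu \zeta_j\|^2 \qquad (\theta,\xi \in \Omega). \] If $\theta_j \in \Omega$ minimizes $E^{j}$ over $\Omega$, then $\xi_j = \nu(\zeta_j - \theta_j)$ minimizes $E^{j}_{\mathrm{d}}$ over $\Omega$, and moreover \[ E^{j}(\theta_j) + E^{j}_{\mathrm{d}}(\xi_j) = 0. \]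
   Context: For a function $h \colon \Omega \to \mathbb{R}\cup\{+\infty\}$, $h^*(p) = \sup_{x\in\Omega}\{\langle p, x\rangle - h(x)\}$ denotes its Legendre--Fenchel conjugate. A function $h$ is $\mu$-strongly convex if $h - \frac{\mu}{2}\|\cdot\|^2$ is convex. In the paper $\zeta_j$ is the local control variate $\zeta_j^{(n)}$ of client $j$ at round $n$ of the algorithm DualFL; the statement holds for that vector, whatever it is. *)

(* Omega = 'rV[R]_n (Euclidean R^n). *)
From HB Require Import structures.
From mathcomp Require Import all_boot all_order all_algebra.
From mathcomp Require Import all_classical all_reals all_analysis.
Set Implicit Arguments. Unset Strict Implicit. Unset Printing Implicit Defensive.
Import Order.TTheory GRing.Theory Num.Theory.
Local Open Scope ring_scope.
Local Open Scope classical_set_scope.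

Definition inner (R : realType) (n : nat) (u v : 'rV[R]_n) : R :=
  \sum_(i < n) u 0 i * v 0 i.

Definition sqnorm (R : realType) (n : nat) (u : 'rV[R]_n) : R := inner u u.

Definition convex_fun (R : realType) (n : nat) (h : 'rV[R]_n -> R) : Prop :=
  forall (x y : 'rV[R]_n) (t : R), 0 <= t -> t <= 1 ->
    h (t *: x + (1 - t) *: y) <= t * h x + (1 - t) * h y.

Definition strongly_convex (R : realType) (n : nat) (mu : R)
  (h : 'rV[R]_n -> R) : Prop :=
  convex_fun (fun x => h x - mu / 2 * sqnorm x).

Definition lf_conj (R : realType) (n : nat) (h : 'rV[R]_n -> R)
  (p : 'rV[R]_n) : \bar R :=
  ereal_sup [set ((inner p x - h x)%:E) | x in [set: 'rV[R]_n]].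

(* E^j is the mu-strongly convex f_j minus a linear term, so at its minimizer
   theta it grows quadratically: E^j(x) - E^j(theta) >= nu/2 |x - theta|^2.
   As g_j - <xi_j, .> equals E^j - nu/2 |. - theta|^2 up to a constant, theta
   attains the supremum defining g_j^*(xi_j).  For any xi', the Fenchel-Young
   bound g_j^*(xi') >= <xi', theta> - g_j(theta) and completing the square give
   E^j_d(xi') >= E^j_d(xi_j) + |xi' - xi_j|^2/(2 nu), and E^j_d(xi_j) =
   -E^j(theta) is a direct computation. *)

From HB Require Import structures.
From mathcomp Require Import all_boot all_order all_algebra.
From mathcomp Require Import all_classical all_reals all_analysis.
From mathcomp Require Import ring lra.
Import Order.TTheory GRing.Theory Num.Theory numFieldNormedType.Exports.
Set Implicit Arguments. Unset Strict Implicit. Unset Printing Implicit Defensive.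
Local Open Scope ring_scope.

Lemma le_of_forall_mul1B (R : realFieldType) (a c : R) : 0 <= c ->
  (forall t : R, 0 < t -> t <= 1 -> c * (1 - t) <= a) -> c <= a.
Proof.
move=> c0 hc; apply/ler_addgt0Pr => e e0.
have ec0 : 0 < e + c by lra.
have t0 : 0 < e / (e + c) by rewrite divr_gt0.
have t1 : e / (e + c) <= 1 by rewrite ler_pdivrMr // mul1r; lra.
have := hc _ t0 t1.
have -> : c * (1 - e / (e + c)) = c - e * (c / (e + c)) by field; lra.
have : c / (e + c) <= 1 by rewrite ler_pdivrMr // mul1r; lra.
nra.
Qed.

Section EuclideanSpace.
Variables (R : realType) (n : nat).
Implicit Types (u v w : 'rV[R]_n) (a : R).

Lemma innerC u v : inner u v = inner v u.
Proof. by apply: eq_bigr => i _; rewrite mulrC. Qed.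

Lemma innerDl u v w : inner (u + v) w = inner u w + inner v w.
Proof. by rewrite /inner -big_split; apply: eq_bigr => i _; rewrite mxE mulrDl. Qed.

Lemma innerZl a u w : inner (a *: u) w = a * inner u w.
Proof. by rewrite /inner mulr_sumr; apply: eq_bigr => i _; rewrite mxE mulrA. Qed.

Lemma innerNl u w : inner (- u) w = - inner u w.
Proof. by rewrite -scaleN1r innerZl mulN1r. Qed.

Lemma innerDr u v w : inner w (u + v) = inner w u + inner w v.
Proof. by rewrite innerC innerDl !(innerC w). Qed.

Lemma innerZr a u w : inner w (a *: u) = a * inner w u.
Proof. by rewrite innerC innerZl innerC. Qed.

Lemma innerNr u w : inner w (- u) = - inner w u.
Proof. by rewrite innerC innerNl innerC. Qed.

Definition innerE := (innerDl, innerDr, innerZl, innerZr, innerNl, innerNr).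

Lemma sqnorm_ge0 u : 0 <= sqnorm u.
Proof. by apply: sumr_ge0 => i _; rewrite -expr2 sqr_ge0. Qed.

Lemma sqnorm0 : sqnorm (0 : 'rV[R]_n) = 0.
Proof. by rewrite /sqnorm /inner big1 // => i _; rewrite mxE mul0r. Qed.

Lemma sqnormB u v : sqnorm (u - v) = sqnorm u - 2 * inner u v + sqnorm v.
Proof. by rewrite /sqnorm !innerE (innerC v u); ring. Qed.

Lemma sqnorm_convex_comb (t : R) u v :
  sqnorm (t *: u + (1 - t) *: v)
  = t * sqnorm u + (1 - t) * sqnorm v - t * (1 - t) * sqnorm (u - v).
Proof. by rewrite /sqnorm !innerE (innerC v u); ring. Qed.

Lemma sqnorm_complete_square a p u w : a != 0 ->
  inner p w + sqnorm (p - u) / (2 * a)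
  = sqnorm (p - (u - a *: w)) / (2 * a) + inner u w - a / 2 * sqnorm w.
Proof. by move=> a0; rewrite /sqnorm !innerE (innerC w p) (innerC w u); field. Qed.

Lemma strongly_convex_subr_inner mu p (h : 'rV[R]_n -> R) :
  strongly_convex mu h -> strongly_convex mu (fun x => h x - inner p x).
Proof.
move=> hc x y t t0 t1; have := hc x y t t0 t1.
rewrite !innerE; lra.
Qed.

Lemma strongly_convex_min_growth mu (h : 'rV[R]_n -> R) x0 : 0 <= mu ->
  strongly_convex mu h -> (forall x, h x0 <= h x) ->
  forall x, mu / 2 * sqnorm (x - x0) <= h x - h x0.
Proof.
move=> mu0 hc hmin x.
apply: le_of_forall_mul1B; first by rewrite mulr_ge0 ?sqnorm_ge0 ?divr_ge0.
move=> t t0 t1; rewrite -(ler_pM2l t0).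
have := hmin (t *: x + (1 - t) *: x0).
have := hc x x0 t (ltW t0) t1; rewrite /= sqnorm_convex_comb.
nra.
Qed.

Lemma lf_conj_ge (h : 'rV[R]_n -> R) p x :
  ((inner p x - h x)%:E <= lf_conj h p)%E.
Proof. by apply: ereal_sup_ubound; exists x. Qed.

Lemma lf_conj_attained (h : 'rV[R]_n -> R) p x :
  (forall y, inner p y - h y <= inner p x - h x) ->
  lf_conj h p = (inner p x - h x)%:E.
Proof.
move=> hmax; apply/eqP; rewrite eq_le lf_conj_ge andbT.
by apply: ge_ereal_sup => _ [y _ <-]; rewrite lee_fin.
Qed.

End EuclideanSpace.

Theorem proposition3p1 (R : realType) (n N : nat) (f : 'I_N -> 'rV[R]_n -> R)
  (mu nu : R) (j : 'I_N) (zeta theta : 'rV[R]_n) :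
  (1 <= N)%N ->
  0 < mu ->
  (forall i, continuous (f i)) ->
  (forall i, convex_fun (f i)) ->
  (forall i, strongly_convex mu (f i)) ->
  0 < nu -> nu <= mu ->
  let g := fun th : 'rV[R]_n => f j th - nu / 2 * sqnorm th in
  let E := fun th : 'rV[R]_n => f j th - nu * inner zeta th in
  let Ed := fun xi : 'rV[R]_n =>
    (lf_conj g xi + (1 / (2 * nu) * sqnorm (xi - nu *: zeta))%:E)%E in
  (forall th, E theta <= E th) ->
  let xi := nu *: (zeta - theta) in
  (forall xi', (Ed xi <= Ed xi')%E) /\ ((E theta)%:E + Ed xi = 0)%E.
Proof.
move=> _ mu0 _ _ sc nu0 numu g E Ed hmin xi.
have sE : strongly_convex mu E.
  have -> : E = fun x => f j x - inner (nu *: zeta) x.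
    by apply/funext => x; rewrite innerZl.
  exact: strongly_convex_subr_inner.
have growth x : nu / 2 * sqnorm (x - theta) <= E x - E theta.
  apply: le_trans (strongly_convex_min_growth (ltW mu0) sE hmin x).
  by rewrite ler_wpM2r ?sqnorm_ge0 ?ler_pM2r.
have conj_xi : lf_conj g xi = (inner xi theta - g theta)%:E.
  apply: lf_conj_attained => y; move: (growth y).
  by rewrite /g /E /xi sqnormB /sqnorm !innerE (innerC theta y); lra.
pose m := nu * inner zeta theta - nu / 2 * sqnorm theta - g theta.
have dual_value xi' :
    inner xi' theta - g theta + 1 / (2 * nu) * sqnorm (xi' - nu *: zeta)
    = sqnorm (xi' - xi) / (2 * nu) + m.
  rewrite mul1r mulrC addrAC (sqnorm_complete_square _ _ _ (lt0r_neq0 nu0)).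
  by rewrite /m /xi innerZl scalerBr; ring.
have Ed_ge xi' : ((sqnorm (xi' - xi) / (2 * nu) + m)%:E <= Ed xi')%E.
  by rewrite /Ed -dual_value EFinD leeD2r ?lf_conj_ge.
have Ed_xi : Ed xi = m%:E.
  by rewrite /Ed conj_xi -EFinD dual_value subrr sqnorm0 mul0r add0r.
split=> [xi'|]; last by rewrite Ed_xi -EFinD /m /E /g; congr EFin; ring.
rewrite Ed_xi; apply: le_trans (Ed_ge xi').
by rewrite lee_fin lerDr divr_ge0 ?sqnorm_ge0 ?mulr_ge0 ?ltW.
Qed.
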